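(* For all $n\ge 2$, $|F_n(321,1243)|=n^2-3n+4$.
   Context: A permutation $\pi$ avoids a classical pattern $p\in S_k$ if no subsequence of $\pi$ of length $k$ is order-isomorphic to $p$. A Fishburn permutation is a permutation $\pi=\pi_1\cdots\pi_n$ of $[n]$ for which there are no indices $i<j$ with $\pi_j<\pi_i<\pi_{i+1}$ and $\pi_i=\pi_j+1$. $F_n(\sigma_1,\dots,\sigma_k)$ denotes the set of Fishburn permutations of length $n$ avoiding each of the classical patterns $\sigma_1,\dots,\sigma_k$. *)

From mathcomp Require Import all_boot all_fingroup.
Set Implicit Arguments.
Unset Strict Implicit.
Unset Printing Implicit Defensive.

(* Permutations of [n] are represented as s : 'S_n acting on {0,...,n-1};
   the one-line notation is pi_(i+1) = (s i) + 1, which preserves order. *)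

Definition contains_pattern (n : nat) (s : 'S_n) (p : seq nat) : bool :=
  [exists idx : (size p).-tuple 'I_n,
    [forall a : 'I_(size p), forall b : 'I_(size p),
       (a < b) ==> (tnth idx a < tnth idx b)] &&
    [forall a : 'I_(size p), forall b : 'I_(size p),
       (s (tnth idx a) < s (tnth idx b)) == (nth 0 p a < nth 0 p b)]].

Definition avoids (n : nat) (s : 'S_n) (p : seq nat) : bool :=
  ~~ contains_pattern s p.

(* Fishburn: no indices i < j with pi_j < pi_i < pi_{i+1} and pi_i = pi_j + 1.
   (i+1 must be a valid position.) *)
Definition fishburn (n : nat) (s : 'S_n) : bool :=
  ~~ [exists i : 'I_n, exists j : 'I_n, exists i1 : 'I_n,
      [&& i1 == i.+1 :> nat, i < j, s j < s i, s i < s i1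
        & (s i : nat) == (s j).+1]].

Definition F_set (n : nat) (pats : seq (seq nat)) : {set 'S_n} :=
  [set s : 'S_n | fishburn s && all (avoids s) pats].

(* Read a permutation as a function f on [0, n).  Avoiding 1243 makes f increasing from any
   position q such that some earlier value is below f q and every later value is above it, and a
   permutation whose values increase from position r on is determined by its values before r.
   Avoidance of 321 and the Fishburn condition then pin down a short prefix: f starts with
   0 y, with 1 0 y, with a 0, with a 0 w, or with a 0 (a+1) ... c followed by the value 1, and
   continues increasingly.  These five families are indexed by disjoint regions of [0, n)^2
   whose total size is n^2 - 3n + 4. *)

From mathcomp Require Import all_boot all_fingroup zify.
Set Implicit Arguments. Unset Strict Implicit. Unset Printing Implicit Defensive.

(* The junk value 0 outside [0, n) is never inspected. *)
Definition oneline n (s : 'S_n) (i : nat) : nat :=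
  if insub i is Some j then val (s j) else 0.

Lemma onelineE n (s : 'S_n) (i : 'I_n) : oneline s i = s i.
Proof. by rewrite /oneline valK. Qed.

Lemma oneline_ord n (s : 'S_n) i (lt_i_n : i < n) : oneline s i = s (Ordinal lt_i_n).
Proof. by rewrite -onelineE. Qed.

Definition fishburn_nat n (f : nat -> nat) := forall i j, i.+1 < n -> i < j -> j < n ->
  f j < f i -> f i < f i.+1 -> f i = (f j).+1 -> False.

Definition avoid321_nat n (f : nat -> nat) := forall i j k, i < j -> j < k -> k < n ->
  f k < f j -> f j < f i -> False.

Definition avoid1243_nat n (f : nat -> nat) := forall i j k l, i < j -> j < k -> k < l -> l < n ->
  f i < f j -> f j < f l -> f l < f k -> False.

Lemma fishburnP n (s : 'S_n) : reflect (fishburn_nat n (oneline s)) (fishburn s).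
Proof.
apply: (iffP negP) => [fish i j i1_lt_n lt_ij lt_j_n | no_pattern].
  have lt_i_n : i < n by lia.
  rewrite (oneline_ord s lt_i_n) (oneline_ord s lt_j_n) (oneline_ord s i1_lt_n) => *.
  apply: fish; apply/existsP; exists (Ordinal lt_i_n); apply/existsP; exists (Ordinal lt_j_n).
  by apply/existsP; exists (Ordinal i1_lt_n); apply/and5P; split => //; apply/eqP.
move=> /existsP [i /existsP [j /existsP [i1 /and5P [/eqP i1E lt_ij ? ? /eqP ?]]]].
have s_i1 : oneline s i.+1 = s i1 by rewrite -i1E onelineE.
by apply: (no_pattern i j); rewrite ?s_i1 ?onelineE // -i1E.
Qed.

Lemma avoid321P n (s : 'S_n) : reflect (avoid321_nat n (oneline s)) (avoids s [:: 3; 2; 1]).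
Proof.
apply: (iffP negP) => [contains i j k lt_ij lt_jk lt_k_n | no_pattern].
  have lt_j_n : j < n by lia. have lt_i_n : i < n by lia.
  rewrite (oneline_ord s lt_i_n) (oneline_ord s lt_j_n) (oneline_ord s lt_k_n) => *.
  apply: contains; apply/existsP; exists [tuple Ordinal lt_i_n; Ordinal lt_j_n; Ordinal lt_k_n].
  apply/andP; split; apply/forallP => -[[|[|[|//]]] ?]; apply/forallP => -[[|[|[|//]]] ?];
    rewrite /tnth //=; apply/eqP; lia.
move=> /existsP [t /andP [/forallP incr /forallP iso]].
have o0 : 0 < 3 by []. have o1 : 1 < 3 by []. have o2 : 2 < 3 by [].
have := implyP (forallP (incr (Ordinal o0)) (Ordinal o1)) isT.
have := implyP (forallP (incr (Ordinal o1)) (Ordinal o2)) isT.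
have := eqP (forallP (iso (Ordinal o1)) (Ordinal o0)).
have := eqP (forallP (iso (Ordinal o2)) (Ordinal o1)).
rewrite /= => ? ? ? ?.
by apply: (no_pattern (tnth t (Ordinal o0)) (tnth t (Ordinal o1)) (tnth t (Ordinal o2)));
  rewrite ?onelineE.
Qed.

Lemma avoid1243P n (s : 'S_n) : reflect (avoid1243_nat n (oneline s)) (avoids s [:: 1; 2; 4; 3]).
Proof.
apply: (iffP negP) => [contains i j k l lt_ij lt_jk lt_kl lt_l_n | no_pattern].
  have lt_k_n : k < n by lia. have lt_j_n : j < n by lia. have lt_i_n : i < n by lia.
  rewrite (oneline_ord s lt_i_n) (oneline_ord s lt_j_n) (oneline_ord s lt_k_n).
  rewrite (oneline_ord s lt_l_n) => *.
  apply: contains; apply/existsP.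
  exists [tuple Ordinal lt_i_n; Ordinal lt_j_n; Ordinal lt_k_n; Ordinal lt_l_n].
  apply/andP; split; apply/forallP => -[[|[|[|[|//]]]] ?];
    apply/forallP => -[[|[|[|[|//]]]] ?]; rewrite /tnth //=; apply/eqP; lia.
move=> /existsP [t /andP [/forallP incr /forallP iso]].
have o0 : 0 < 4 by []. have o1 : 1 < 4 by []. have o2 : 2 < 4 by []. have o3 : 3 < 4 by [].
have := implyP (forallP (incr (Ordinal o0)) (Ordinal o1)) isT.
have := implyP (forallP (incr (Ordinal o1)) (Ordinal o2)) isT.
have := implyP (forallP (incr (Ordinal o2)) (Ordinal o3)) isT.
have := eqP (forallP (iso (Ordinal o0)) (Ordinal o1)).
have := eqP (forallP (iso (Ordinal o1)) (Ordinal o3)).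
have := eqP (forallP (iso (Ordinal o3)) (Ordinal o2)).
rewrite /= => ? ? ? ? ? ?.
by apply: (no_pattern (tnth t (Ordinal o0)) (tnth t (Ordinal o1)) (tnth t (Ordinal o2))
  (tnth t (Ordinal o3))); rewrite ?onelineE.
Qed.

Definition natperm n (f : nat -> nat) :=
  (forall i, i < n -> f i < n) /\ (forall i j, i < n -> j < n -> f i = f j -> i = j).

Definition eq_below n (f g : nat -> nat) := forall i, i < n -> f i = g i.

Definition increasing_on r n (f : nat -> nat) := forall i j, r <= i -> i < j -> j < n -> f i < f j.

Lemma natperm_oneline n (s : 'S_n) : natperm n (oneline s).
Proof.
split=> [i lt_i_n | i j lt_i_n lt_j_n]; rewrite !(oneline_ord s lt_i_n) //.
by rewrite (oneline_ord s lt_j_n) => /val_inj/perm_inj [].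
Qed.

Lemma natperm_perm n f : natperm n f -> exists s : 'S_n, eq_below n (oneline s) f.
Proof.
move=> [f_bnd f_inj].
pose h := [ffun i : 'I_n => Ordinal (f_bnd i (ltn_ord i))].
have h_inj : injective h.
  move=> i j /(congr1 val); rewrite !ffunE /= => /f_inj eq_ij.
  exact/val_inj/eq_ij.
by exists (perm h_inj) => i lt_i_n; rewrite (oneline_ord _ lt_i_n) permE ffunE.
Qed.

Lemma natperm_onto n f v : natperm n f -> v < n -> exists2 i, i < n & f i = v.
Proof.
move=> /natperm_perm [s sE] lt_v_n; exists ((s^-1)%g (Ordinal lt_v_n)) => //.
by rewrite -sE // onelineE permKV.
Qed.

Lemma natperm_eq_below_increasing_tail n r f g : natperm n f -> natperm n g ->
  eq_below r f g -> increasing_on r n f -> increasing_on r n g -> eq_below n f g.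
Proof.
move=> f_perm g_perm prefix f_incr g_incr.
have [[f_bnd f_inj] [g_bnd g_inj]] := (f_perm, g_perm).
elim/ltn_ind => i IH lt_i_n; case: (ltnP i r) => [|le_ri]; first exact: prefix.
have [m lt_m_n fmE] := natperm_onto f_perm (g_bnd i lt_i_n).
have [m' lt_m'_n gm'E] := natperm_onto g_perm (f_bnd i lt_i_n).
have le_im : i <= m.
  rewrite leqNgt; apply/negP => lt_mi.
  by have := g_inj m i lt_m_n lt_i_n; rewrite -fmE IH //; lia.
have le_im' : i <= m'.
  rewrite leqNgt; apply/negP => lt_m'i.
  by have := f_inj m' i lt_m'_n lt_i_n; rewrite -gm'E -IH //; lia.
case: (ltngtP i m) => [lt_im | ? | eq_im]; [| lia | by rewrite -fmE eq_im].
case: (ltngtP i m') => [lt_im' | ? | eq_im']; [| lia | by rewrite -gm'E eq_im'].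
have := f_incr i m le_ri lt_im lt_m_n; have := g_incr i m' le_ri lt_im' lt_m'_n; lia.
Qed.

Definition perm_of_fun n (f : nat -> nat) : 'S_n :=
  odflt 1%g [pick s : 'S_n | [forall i : 'I_n, s i == f i :> nat]].

Lemma perm_of_fun_eq n f (s : 'S_n) : eq_below n (oneline s) f -> perm_of_fun n f = s.
Proof.
move=> sE; rewrite /perm_of_fun; case: pickP => [s' /forallP s'E | /(_ s) /forallP []] /=.
  by apply/permP => i; apply: val_inj; rewrite /= (eqP (s'E i)) -onelineE sE.
by move=> i; rewrite -onelineE sE.
Qed.

Lemma perm_of_funE n f : natperm n f -> eq_below n (oneline (perm_of_fun n f)) f.
Proof. by case/natperm_perm => s sE; rewrite (perm_of_fun_eq sE). Qed.

Lemma perm_of_fun_inj n f g : natperm n f -> natperm n g ->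
  perm_of_fun n f = perm_of_fun n g -> eq_below n f g.
Proof.
by move=> /perm_of_funE fE /perm_of_funE gE fg i lt_i_n; rewrite -fE // -gE // fg.
Qed.

Definition fishburn_class n f :=
  [/\ natperm n f, fishburn_nat n f, avoid321_nat n f & avoid1243_nat n f].

Lemma F_setP n (s : 'S_n) : reflect (fishburn_class n (oneline s))
  (s \in F_set n [:: [:: 3; 2; 1]; [:: 1; 2; 4; 3]]).
Proof.
rewrite inE /= andbT; apply: (iffP and3P) => [[/fishburnP ? /avoid321P ? /avoid1243P ?] |].
  by split=> //; apply: natperm_oneline.
by case=> _ /fishburnP ? /avoid321P ? /avoid1243P ?.
Qed.

Lemma fishburn_class_eq_below n f g : eq_below n f g -> fishburn_class n g -> fishburn_class n f.
Proof.
move=> fg [[g_bnd g_inj] g_fish g_321 g_1243]; split; first split.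
- by move=> i lt_i_n; rewrite fg //; apply: g_bnd.
- by move=> i j lt_i_n lt_j_n; rewrite !fg //; apply: g_inj.
- by move=> i j *; apply: (g_fish i j); rewrite -?fg //; lia.
- by move=> i j k *; apply: (g_321 i j k); rewrite -?fg //; lia.
- by move=> i j k l *; apply: (g_1243 i j k l); rewrite -?fg //; lia.
Qed.

(* Prefixes 0 y | 1 0 y | a 0 | a 0 w | a 0 (a+1) ... c, each followed by the remaining values
   of [0, n) in increasing order. *)
Definition lead0 y i := if i == 0 then 0 else if i == 1 then y else if i <= y then i - 1 else i.
Definition lead10 y i := if i == 0 then 1 else if i == 1 then 0 else if i == 2 then y
  else if i <= y then i - 1 else i.
Definition leadA0 a i := if i == 0 then a else if i == 1 then 0 else if i <= a then i - 1 else i.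
Definition leadA0W a w i := if i == 0 then a else if i == 1 then 0 else if i == 2 then w
  else if i <= a + 1 then i - 2 else if i <= w then i - 1 else i.
Definition leadA0run a c i := if i == 0 then a else if i == 1 then 0
  else if i <= c - a + 1 then a + i - 1 else if i <= c then i - (c - a + 1) else i.

Ltac case_ifs := repeat match goal with
  | H : context [if ?b then _ else _] |- _ => let E := fresh "E" in destruct b eqn:E
  | |- context [if ?b then _ else _] => let E := fresh "E" in destruct b eqn:E
  end.

Ltac solve_class := split; [split|..]; move=> *; case_ifs; lia.

Lemma lead0_class n y : 0 < y < n -> fishburn_class n (lead0 y).
Proof. rewrite /lead0; solve_class. Qed.
Lemma lead10_class n y : (1 < y < n) || (n == 2) && (y == 0) -> fishburn_class n (lead10 y).
Proof. rewrite /lead10; solve_class. Qed.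
Lemma leadA0_class n a : 1 < a < n -> fishburn_class n (leadA0 a).
Proof. rewrite /leadA0; solve_class. Qed.
Lemma leadA0W_class n a w : 1 < a < w -> w < n -> fishburn_class n (leadA0W a w).
Proof. rewrite /leadA0W; solve_class. Qed.
Lemma leadA0run_class n a c : 1 < a -> a + 2 <= c < n -> fishburn_class n (leadA0run a c).
Proof. rewrite /leadA0run; solve_class. Qed.

Lemma lead0_tail n y : increasing_on 2 n (lead0 y).
Proof. move=> i j *; rewrite /lead0; case_ifs; lia. Qed.
Lemma lead10_tail n y : increasing_on 3 n (lead10 y).
Proof. move=> i j *; rewrite /lead10; case_ifs; lia. Qed.
Lemma leadA0_tail n a : increasing_on 2 n (leadA0 a).
Proof. move=> i j *; rewrite /leadA0; case_ifs; lia. Qed.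
Lemma leadA0W_tail n a w : a < w -> increasing_on 3 n (leadA0W a w).
Proof. move=> i j *; rewrite /leadA0W; case_ifs; lia. Qed.
Lemma leadA0run_tail n a c : a < c -> increasing_on (c - a + 2) n (leadA0run a c).
Proof. move=> i j *; rewrite /leadA0run; case_ifs; lia. Qed.

(* The family indexed by (x, y): x = 0; x = 1 (with (1, 0) standing for [1 0] when n = 2);
   y = 0; 1 < x < y; and 1 < y < x - 1, where (c, a) encodes the run family of a and c. *)
Definition fam x y := if x == 0 then lead0 y else if x == 1 then lead10 y
  else if y == 0 then leadA0 x else if x < y then leadA0W x y else leadA0run y x.

Definition admissible n x y := [&& x < n, y < n & [|| (x == 0) && (0 < y),
  (x == 1) && ((1 < y) || (n == 2) && (y == 0)), (1 < x) && (y == 0),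
  1 < x < y | (1 < y) && (y + 2 <= x)]].

Lemma fam_class n x y : admissible n x y -> fishburn_class n (fam x y).
Proof.
rewrite /admissible /fam => adm.
case: ifP => x0; first by apply: lead0_class; lia.
case: ifP => x1; first by apply: lead10_class; lia.
case: ifP => y0; first by apply: leadA0_class; lia.
by case: ifP => lt_xy; [apply: leadA0W_class | apply: leadA0run_class]; lia.
Qed.

Lemma famA0 a : 1 < a -> fam a 0 = leadA0 a.
Proof. by rewrite /fam; repeat case: ifP => ?; try lia. Qed.

Lemma famA0W a w : 1 < a < w -> fam a w = leadA0W a w.
Proof. by rewrite /fam; repeat case: ifP => ?; try lia. Qed.

Lemma famA0run a c : 1 < a < c -> fam c a = leadA0run a c.
Proof. by rewrite /fam; repeat case: ifP => ?; try lia. Qed.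

Definition fam_member n f := exists x y, admissible n x y /\ eq_below n f (fam x y).

Section Classification.
Variables (n : nat) (f : nat -> nat).
Hypotheses (n_gt1 : 1 < n) (f_class : fishburn_class n f).

Let f_perm : natperm n f. Proof. by case: f_class. Qed.
Let f_bnd i : i < n -> f i < n. Proof. by case: f_perm => bnd _; apply: bnd. Qed.
Let f_fish : fishburn_nat n f. Proof. by case: f_class. Qed.
Let f_321 : avoid321_nat n f. Proof. by case: f_class. Qed.
Let f_1243 : avoid1243_nat n f. Proof. by case: f_class. Qed.

Let f_neq i j : i < n -> j < n -> i <> j -> f i <> f j.
Proof. by case: f_perm => _ f_inj lt_i_n lt_j_n neq_ij /f_inj; auto. Qed.

Ltac distinct i j := let H := fresh "ne" in have H := @f_neq i j ltac:(lia) ltac:(lia) ltac:(lia).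

Lemma ascent_pred_left i j : i.+1 < n -> j < n -> f i < f i.+1 -> f i = (f j).+1 -> j < i.
Proof.
move=> lt_i1_n lt_j_n asc fiE.
case: (ltngtP j i) => // [lt_ij | eq_ji]; last by move: fiE; rewrite eq_ji; lia.
by exfalso; apply: (f_fish lt_i1_n lt_ij lt_j_n); lia.
Qed.

Lemma increasing_from p q : p < q -> f p < f q -> (forall j, q < j < n -> f q < f j) ->
  increasing_on q n f.
Proof.
move=> lt_pq lt_fp_fq above_q i j le_qi lt_ij lt_j_n; distinct i j.
case: (ltngtP (f i) (f j)) => [// | lt_fj_fi | eq_fij]; last by lia.
case: (i =P q) => [eq_iq | ne_iq]; first by have := above_q j ltac:(lia); rewrite -eq_iq; lia.
have lt_fq_fj := above_q j ltac:(lia).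
by exfalso; apply: (f_1243 (i := p) (j := q) (k := i) (l := j)); lia.
Qed.

Lemma increasing_after_block m : 0 < m < n -> (forall j, j < m -> f j < m) ->
  (forall j, m <= j < n -> m <= f j) -> increasing_on m.+1 n f.
Proof.
move=> m_bounds below_m above_m.
have [q lt_q_n fq] := natperm_onto f_perm (v := m) ltac:(lia).
have le_mq : m <= q by rewrite leqNgt; apply/negP => /below_m; lia.
have gt_m k : m <= k < n -> k <> q -> m < f k.
  by move=> k_bounds ne_kq; have := above_m k k_bounds; distinct k q; lia.
have le_q_m1 : q <= m.+1.
  rewrite leqNgt; apply/negP => lt_m1_q.
  have := gt_m m ltac:(lia) ltac:(lia); have := gt_m m.+1 ltac:(lia) ltac:(lia).
  distinct m m.+1; case: (ltngtP (f m) (f m.+1)) => [asc | desc | eq_fm] gt_fm1 gt_fm; last by lia.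
    have [j lt_j_n fj] := natperm_onto f_perm (v := (f m).-1) ltac:(have := @f_bnd m; lia).
    have := ascent_pred_left (i := m) (j := j) ltac:(lia) lt_j_n asc ltac:(lia).
    by move=> /below_m; lia.
  by exfalso; apply: (f_321 (i := m) (j := m.+1) (k := q)); lia.
have incr_q : increasing_on q n f.
  apply: (increasing_from (p := 0)); [lia | by have := below_m 0; lia |].
  by move=> j q_j_n; rewrite fq; apply: gt_m; lia.
by move=> i j *; apply: incr_q; lia.
Qed.

Lemma fam_member_of_prefix x y r : admissible n x y -> eq_below r f (fam x y) ->
  increasing_on r n f -> increasing_on r n (fam x y) -> fam_member n f.
Proof.
move=> adm prefix f_tail fam_tail; exists x, y; split => //.
by apply: natperm_eq_below_increasing_tail prefix f_tail fam_tail; case: (fam_class adm).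
Qed.

Lemma classify_start0 : f 0 = 0 -> fam_member n f.
Proof.
move=> f0; have f1_bounds := @f_bnd 1 n_gt1; distinct 1 0.
apply: (@fam_member_of_prefix 0 (f 1) 2); first by rewrite /admissible; lia.
- by case=> [|[|]].
- apply: (increasing_after_block (m := 1)); first lia.
  + by case=> [|//]; rewrite f0.
  + by move=> j ?; distinct j 0; lia.
- exact: lead0_tail.
Qed.

Lemma classify_start10 : f 0 = 1 -> f 1 = 0 -> fam_member n f.
Proof.
move=> f0 f1; case: (n =P 2) => [n2 | n_ne2].
  by apply: (@fam_member_of_prefix 1 0 2);
    [rewrite /admissible n2 | case=> [|[|]] | move=> i j *; lia..].
have f2_bounds := @f_bnd 2 ltac:(lia); distinct 2 0; distinct 2 1.
apply: (@fam_member_of_prefix 1 (f 2) 3); first by rewrite /admissible; lia.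
- by case=> [|[|[|]]].
- apply: (increasing_after_block (m := 2)); first lia.
  + by case=> [|[|//]]; rewrite ?f0 ?f1.
  + by move=> j ?; distinct j 0; distinct j 1; lia.
- exact: lead10_tail.
Qed.

Section StartA0.
Variables (a t : nat).
Hypotheses (f0 : f 0 = a) (a_gt1 : 1 < a) (f1 : f 1 = 0) (lt_t_n : t < n) (ft : f t = 1).

Let t_gt1 : 1 < t.
Proof. by case: t ft lt_t_n => [|[|]] //; rewrite ?f0 ?f1; lia. Qed.

Lemma increasing_from_one : increasing_on t n f.
Proof.
apply: (increasing_from (p := 1)); [lia | lia | move=> j ?].
by distinct j 1; distinct j t; lia.
Qed.

Lemma gt_first_before_one i : 1 < i < t -> a < f i.
Proof.
move=> i_bounds; distinct i 0; distinct i 1; distinct i t.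
case: (ltngtP a (f i)) => [// | lt_fi_a | ]; last by lia.
by exfalso; apply: (f_321 (i := 0) (j := i) (k := t)); lia.
Qed.

Lemma increasing_before_one : increasing_on 2 t f.
Proof.
move=> i j le_2i lt_ij lt_jt; distinct i j.
have := gt_first_before_one (i := j) ltac:(lia).
case: (ltngtP (f i) (f j)) => [// | lt_fj_fi | ] gt_fj; last by lia.
by exfalso; apply: (f_321 (i := i) (j := j) (k := t)); lia.
Qed.

Lemma prefix_max_before_one k j : 1 < k < t -> j <= k -> f j <= f k.
Proof.
move=> k_bounds le_jk; case: j le_jk => [|[|j]] le_jk.
- by rewrite f0; have := gt_first_before_one (i := k) k_bounds; lia.
- by rewrite f1.
case: (ltngtP j.+2 k) => [lt_jk | | ->] //; last by lia.
by have := increasing_before_one (i := j.+2) (j := k); lia.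
Qed.

Lemma run_before_one i : 1 < i -> i.+1 < t -> f i = a + i - 1.
Proof.
elim/ltn_ind: i => i IH lt_1i lt_i1_t.
have asc := increasing_before_one (i := i) (j := i.+1) lt_1i (ltnSn i) lt_i1_t.
have gt_a := gt_first_before_one (i := i) ltac:(lia).
have [j lt_j_n fj] := natperm_onto f_perm (v := (f i).-1) ltac:(have := @f_bnd i; lia).
have lt_ji := ascent_pred_left (i := i) (j := j) ltac:(lia) lt_j_n asc ltac:(lia).
case: (i =P 2) => [i2 | ne_i2].
  by move: fj; rewrite i2 in lt_ji gt_a *; case: j lt_ji lt_j_n => [|[|]] //; rewrite ?f0 ?f1; lia.
have := IH i.-1 ltac:(lia) ltac:(lia) ltac:(lia).
have := increasing_before_one (i := i.-1) (j := i) ltac:(lia) ltac:(lia) ltac:(lia).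
have := prefix_max_before_one (k := i.-1) (j := j) ltac:(lia) ltac:(lia).
lia.
Qed.

Lemma run_last : 3 < t -> f t.-1 = a + t - 2.
Proof.
move=> t_gt3.
have prev := run_before_one (i := t - 2) ltac:(lia) ltac:(lia).
have run2 := run_before_one (i := 2) ltac:(lia) ltac:(lia).
have := increasing_before_one (i := t - 2) (j := t.-1) ltac:(lia) ltac:(lia) ltac:(lia).
have := @f_bnd t.-1 ltac:(lia).
case: (f t.-1 =P a + t - 2) => // ne_last lt_last_n gt_last.
have [j lt_j_n fj] := natperm_onto f_perm (v := a + t - 2) ltac:(lia).
have lt_tj : t < j.
  rewrite ltnNge; apply/negP => le_jt.
  case: (ltngtP j t.-1) => [lt_j_t1 | lt_t1_j | eq_j_t1]; last by move: fj; rewrite eq_j_t1.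
    by have := prefix_max_before_one (k := t - 2) (j := j) ltac:(lia) ltac:(lia); lia.
  have eq_jt : j = t by lia.
  by move: fj; rewrite eq_jt ft; lia.
by exfalso; apply: (f_1243 (i := 0) (j := 2) (k := t.-1) (l := j)); lia.
Qed.

Lemma classify_startA0 : fam_member n f.
Proof.
have f0_lt_n := @f_bnd 0 ltac:(lia).
case: (ltngtP t 3) => [lt_t3 | gt_t3 | t3].
- have famE : fam a 0 = leadA0 a := famA0 a_gt1.
  apply: (@fam_member_of_prefix a 0 2); rewrite ?famE.
  + by rewrite /admissible; lia.
  + by case=> [|[|]].
  + by move=> i j *; apply: increasing_from_one; lia.
  + exact: leadA0_tail.
- have f_run i : 1 < i < t -> f i = a + i - 1.
    move=> i_bounds; case: (i =P t.-1) => [-> | ne_i_t1]; first by rewrite run_last; lia.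
    by apply: run_before_one; lia.
  have famE : fam (a + t - 2) a = leadA0run a (a + t - 2) by apply: famA0run; lia.
  apply: (@fam_member_of_prefix (a + t - 2) a t); rewrite ?famE.
  + by have := @f_bnd t.-1 ltac:(lia); rewrite run_last /admissible; lia.
  + move=> [|[|i]] lt_it; rewrite /leadA0run //=.
    by rewrite f_run; [case_ifs | ]; lia.
  + exact: increasing_from_one.
  + by move=> i j *; apply: (@leadA0run_tail n); lia.
- have w_bounds := @f_bnd 2 ltac:(lia); have gt_w := gt_first_before_one (i := 2) ltac:(lia).
  have famE : fam a (f 2) = leadA0W a (f 2) by apply: famA0W; lia.
  apply: (@fam_member_of_prefix a (f 2) 3); rewrite ?famE.
  + by rewrite /admissible; lia.
  + by case=> [|[|[|]]].
  + by move=> i j *; apply: increasing_from_one; lia.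
  + exact: leadA0W_tail.
Qed.
End StartA0.

Lemma classification : fam_member n f.
Proof.
distinct 0 1; case: (ltngtP (f 0) (f 1)) => [asc | desc | ]; last by lia.
  apply: classify_start0; case: (f 0 =P 0) => // f0_ne0.
  have [j lt_j_n fj] := natperm_onto f_perm (v := (f 0).-1) ltac:(have := @f_bnd 0; lia).
  by have := ascent_pred_left (i := 0) (j := j) n_gt1 lt_j_n asc ltac:(lia).
have f1 : f 1 = 0.
  case: (f 1 =P 0) => // f1_ne0.
  have [p lt_p_n fp] := natperm_onto f_perm (v := 0) ltac:(lia).
  case: p fp lt_p_n => [|[|p]] fp lt_p_n; try lia.
  by exfalso; apply: (f_321 (i := 0) (j := 1) (k := p.+2)); lia.
case: (f 0 =P 1) => [f0 | f0_ne1]; first exact: classify_start10.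
have [t lt_t_n ft] := natperm_onto f_perm (v := 1) n_gt1.
by apply: (classify_startA0 (t := t) (erefl (f 0))); lia.
Qed.
End Classification.

Ltac split_ifs_lia := repeat (first [lia | match goal with
  | H : context [if ?b then _ else _] |- _ => let E := fresh "E" in destruct b eqn:E end]).
Ltac at_pos E k := try (let H := fresh "e" in have H := E k ltac:(lia)).

(* Positions 0 to 3, and the position c - a + 2 of the value 1 in [leadA0run a c], tell the
   admissible indices apart. *)
Lemma fam_inj n x y x' y' : admissible n x y -> admissible n x' y' ->
  eq_below n (fam x y) (fam x' y') -> x = x' /\ y = y'.
Proof.
rewrite /admissible /fam => adm adm'.
case: (n =P 2) => n2.
all: case X0: (x == 0); case X1: (x == 1); case Y0: (y == 0); case XY: (x < y);
  case X0': (x' == 0); case X1': (x' == 1); case Y0': (y' == 0); case XY': (x' < y'); move=> /= E;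
  try (exfalso; lia).
all: at_pos E 0; at_pos E 1; at_pos E 2; at_pos E 3; at_pos E (x - y + 2); at_pos E (x' - y' + 2);
  clear E; unfold lead0, lead10, leadA0, leadA0W, leadA0run in *; split_ifs_lia.
Qed.

Lemma sum_range n lo hi : \sum_(y < n) (lo <= y < hi : nat) = minn hi n - lo.
Proof. by elim: n => [|n IH]; rewrite ?big_ord0 ?big_ord_recr /= ?IH; lia. Qed.

Definition row_size n x :=
  if x == 0 then n.-1 else if x == 1 then n - 2 + (n == 2) else n - 3 + (x == 2).

Lemma sum_admissible_row n x : 1 < n -> x < n ->
  \sum_(y < n) (admissible n x y : nat) = row_size n x.
Proof.
move=> n_gt1 lt_x_n; rewrite /row_size.
case: ifP => x0.
  rewrite (eq_bigr (fun y : 'I_n => (1 <= y < n : nat))) ?sum_range; first lia.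
  by move=> y _; have := ltn_ord y; rewrite /admissible; lia.
case: ifP => x1.
  rewrite (eq_bigr (fun y : 'I_n => (2 <= y < n : nat) + (0 <= y < (n == 2)))).
    by rewrite big_split !sum_range /=; lia.
  by move=> y _; have := ltn_ord y; rewrite /admissible; lia.
rewrite (eq_bigr (fun y : 'I_n => (0 <= y < 1 : nat) + (x.+1 <= y < n) + (2 <= y < x - 1))).
  by rewrite !big_split !sum_range /=; lia.
by move=> y _; have := ltn_ord y; rewrite /admissible; lia.
Qed.

Lemma card_admissible n : 1 < n ->
  #|[set p : 'I_n * 'I_n | admissible n p.1 p.2]| = n ^ 2 + 4 - 3 * n.
Proof.
move=> n_gt1; rewrite -sum1_card big_mkcond /=.
have -> : \sum_(p : 'I_n * 'I_n)
      (if p \in [set p : 'I_n * 'I_n | admissible n p.1 p.2] then 1 else 0)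
    = \sum_(x < n) \sum_(y < n) (admissible n x y : nat).
  by rewrite pair_bigA; apply: eq_bigr => -[x y] _; rewrite inE; case: admissible.
rewrite (eq_bigr (fun x : 'I_n => row_size n x)); last by move=> x _; rewrite sum_admissible_row.
case: n n_gt1 => [|[|m]] // _; rewrite !big_ord_recl.
rewrite (eq_bigr (fun i : 'I_m => m - 1 + (i == 0 :> nat))); last first.
  by move=> i _; rewrite /row_size /= /bump /=; lia.
rewrite big_split sum_nat_const card_ord /=.
rewrite (eq_bigr (fun i : 'I_m => (0 <= i < 1 : nat))) ?sum_range; last by move=> i _; lia.
rewrite /row_size /= !expnS expn0; case: m => [|m] //=; nia.
Qed.

Theorem mainTheorem6 (n : nat) : 2 <= n ->
  #|F_set n [:: [:: 3; 2; 1]; [:: 1; 2; 4; 3]]| = n ^ 2 + 4 - 3 * n.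
Proof.
move=> n_gt1; set A := [set p : 'I_n * 'I_n | admissible n p.1 p.2].
pose perm_at (p : 'I_n * 'I_n) := perm_of_fun n (fam p.1 p.2).
have fam_natperm p : p \in A -> natperm n (fam p.1 p.2) by rewrite inE => /fam_class [].
have -> : F_set n [:: [:: 3; 2; 1]; [:: 1; 2; 4; 3]] = perm_at @: A.
  apply/setP => s; apply/F_setP/imsetP => [s_class | [p p_in_A ->]].
    have [x [y [adm sE]]] := classification n_gt1 s_class.
    have [lt_x_n lt_y_n _] := and3P adm.
    by exists (Ordinal lt_x_n, Ordinal lt_y_n); [rewrite inE | exact/esym/perm_of_fun_eq].
  apply: fishburn_class_eq_below (perm_of_funE (fam_natperm p p_in_A)) _.
  by apply: fam_class; rewrite inE in p_in_A.
rewrite card_in_imset ?card_admissible // => -[x y] [x' y'] in_A in_A' eq_perm.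
have eq_fam := perm_of_fun_inj (fam_natperm _ in_A) (fam_natperm _ in_A') eq_perm.
rewrite !inE in in_A in_A'.
by case: (fam_inj in_A in_A' eq_fam) => /= /val_inj -> /val_inj ->.
Qed.
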